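(* Let $n_{k'}\le n_k$. Then $\ker(Z_{k,k'}^*Z_{k,k'})=\ker Z_{k,k'}=\mathrm{span}\{\varphi_{a_k}:a=n_{k'},\dots,n_k-1\}$, where kernels are taken of the operators restricted to $E_k$.
   Context: Let $\mathcal H$ be a finite-dimensional complex Hilbert space and $E_k,E_{k'}$ mutually orthogonal subspaces with $n_k=\dim E_k$, $n_{k'}=\dim E_{k'}$ and orthonormal bases $\{|a_k\rangle:0\le a\le n_k-1\}$, $\{|b_{k'}\rangle:0\le b\le n_{k'}-1\}$. For vectors $x,y$, $|x\rangle\langle y|$ is the operator $u\mapsto\langle y,u\rangle x$. $\zeta_k=e^{2\pi i/n_k}$. The transition operator is $Z_{k,k'}=n_k^{-1/2}\sum_{b=0}^{n_{k'}-1}\sum_{a=0}^{n_k-1}\zeta_k^{ba}|b_{k'}\rangle\langle a_k|$, and the $k$-entangled basis is $\varphi_{a_k}=n_k^{-1/2}\sum_{b=0}^{n_k-1}\zeta_k^{-ba}|b_k\rangle$, $0\le a\le n_k-1$. *)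

From HB Require Import structures.
From mathcomp Require Import all_boot all_order all_algebra.
From mathcomp Require Import complex.
From mathcomp Require Import reals trigo.
Set Implicit Arguments. Unset Strict Implicit. Unset Printing Implicit Defensive.
Import Order.TTheory GRing.Theory Num.Theory.
Local Open Scope ring_scope.
Local Open Scope complex_scope.

Section Defs.
Variable R : realType.
Local Notation C := R[i].
Variable N : nat.
(* The Hilbert space H is modelled as C^N (column vectors) with the standard
   inner product, conjugate-linear in the first argument. *)
Definition cdot (u v : 'cV[C]_N) : C := \sum_(i < N) (u i 0)^* * v i 0.

Definition adj m n (A : 'M[C]_(m, n)) : 'M[C]_(n, m) := (map_mx conjc A)^T.

Definition ketbra (x y : 'cV[C]_N) : 'M[C]_N := x *m adj y.

Definition onbasis n (e : 'I_n -> 'cV[C]_N) : Prop :=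
  forall i j : 'I_n, cdot (e i) (e j) = (i == j)%:R.

Definition zeta (n : nat) : C :=
  (cos (2 * pi / n%:R)) +i* (sin (2 * pi / n%:R)).

Definition invsqrt (n : nat) : C := ((Num.sqrt (n%:R : R))^-1)%:C.

(* Z_{k,k'} = n_k^{-1/2} sum_b sum_a zeta_k^{ba} |b_{k'}><a_k| *)
Definition Zop nk nk' (e : 'I_nk -> 'cV[C]_N) (f : 'I_nk' -> 'cV[C]_N)
  : 'M[C]_N :=
  invsqrt nk *: \sum_(b < nk') \sum_(a < nk)
      (zeta nk ^+ (b * a)) *: ketbra (f b) (e a).

Definition phi_basis nk (e : 'I_nk -> 'cV[C]_N) (a : 'I_nk) : 'cV[C]_N :=
  invsqrt nk *: \sum_(b < nk) (zeta nk ^- (b * a)) *: e b.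

(* membership in E_k = span of its onbasis basis *)
Definition in_span n (v : 'I_n -> 'cV[C]_N) (x : 'cV[C]_N) : Prop :=
  exists c : 'I_n -> C, x = \sum_(i < n) c i *: v i.

Definition in_span_from n (m : nat) (v : 'I_n -> 'cV[C]_N) (x : 'cV[C]_N)
  : Prop :=
  exists c : 'I_n -> C, x = \sum_(i < n | (m <= i)%N) c i *: v i.
End Defs.

From mathcomp Require Import all_boot all_order all_algebra.
From mathcomp Require Import complex.
From mathcomp Require Import reals trigo ring lra.
Import GRing.Theory Num.Theory.
Local Open Scope ring_scope.
Set Implicit Arguments. Unset Strict Implicit. Unset Printing Implicit Defensive.

(* The vectors phi_a are the discrete Fourier transform of the basis (e_b):
   by the orthogonality of the characters b |-> zeta^(a b) they form another
   orthonormal basis of E_k.  Since conj zeta = zeta^-1, the transition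
   operator is Z = sum_(b < n_k') |f_b><phi_b|, so a vector x of E_k lies in
   ker Z iff <phi_b, x> = 0 for all b < n_k', i.e. iff its expansion in the
   basis (phi_a) only involves a >= n_k'.  Finally ker (Z^* Z) = ker Z because
   <Zx, Zx> = <x, Z^* Z x>. *)

Section InnerProduct.
Variables (R : realType) (N : nat).
Implicit Types (u v x y : 'cV[R[i]]_N) (a : R[i]).

Lemma cdot_mx u v : adj u *m v = (cdot u v)%:M.
Proof.
rewrite [LHS]mx11_scalar; congr (_%:M).
by rewrite !mxE; apply: eq_bigr => k _; rewrite !mxE.
Qed.

Lemma cdotZr u a v : cdot u (a *: v) = a * cdot u v.
Proof. by rewrite /cdot mulr_sumr; apply: eq_bigr => k _; rewrite mxE mulrCA. Qed.

Lemma cdotZl a u v : cdot (a *: u) v = a^* * cdot u v.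
Proof.
by rewrite /cdot mulr_sumr; apply: eq_bigr => k _; rewrite mxE rmorphM mulrA.
Qed.

Lemma cdot_sumr (I : finType) (P : pred I) u (F : I -> 'cV[R[i]]_N) :
  cdot u (\sum_(i | P i) F i) = \sum_(i | P i) cdot u (F i).
Proof.
rewrite /cdot exchange_big; apply: eq_bigr => k _.
by rewrite summxE mulr_sumr.
Qed.

Lemma cdot_suml (I : finType) (P : pred I) (F : I -> 'cV[R[i]]_N) v :
  cdot (\sum_(i | P i) F i) v = \sum_(i | P i) cdot (F i) v.
Proof.
rewrite /cdot exchange_big; apply: eq_bigr => k _.
by rewrite summxE rmorph_sum mulr_suml.
Qed.

Lemma cdot_self_eq0 x : cdot x x = 0 -> x = 0.
Proof.
move=> /eqP; rewrite psumr_eq0 => [/allP x0|k _]; last by rewrite mulrC mul_conjC_ge0.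
apply/matrixP => k j; rewrite (ord1 j) mxE.
by move: (x0 k (mem_index_enum k)); rewrite mulrC mul_conjC_eq0 => /eqP.
Qed.

Lemma ketbra_mulmx x y v : ketbra x y *m v = cdot y v *: x.
Proof. by rewrite /ketbra -mulmxA cdot_mx mul_mx_scalar. Qed.

End InnerProduct.

Lemma adjM (R : realType) m n p (A : 'M[R[i]]_(m, n)) (B : 'M_(n, p)) :
  adj (A *m B) = adj B *m adj A.
Proof. by rewrite /adj map_mxM trmx_mul. Qed.

Lemma mulmx_adj_self_eq0 (R : realType) m n (A : 'M[R[i]]_(m, n)) (x : 'cV_n) :
  adj A *m A *m x = 0 <-> A *m x = 0.
Proof.
split=> [AAx0 | Ax0]; last by rewrite -mulmxA Ax0 mulmx0.
apply: cdot_self_eq0.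
have := cdot_mx (A *m x) (A *m x).
rewrite adjM -mulmxA [adj A *m _]mulmxA AAx0 mulmx0 => /matrixP/(_ 0 0).
by rewrite !mxE eqxx mulr1n => <-.
Qed.

Section Span.
Variables (R : realType) (N : nat).
Local Notation vec := 'cV[R[i]]_N.

Lemma in_span_trans n n' (v : 'I_n -> vec) (w : 'I_n' -> vec)
    (M : 'I_n -> 'I_n' -> R[i]) x :
  (forall i, v i = \sum_j M i j *: w j) -> in_span v x -> in_span w x.
Proof.
move=> vE [c ->]; exists (fun j => \sum_i c i * M i j).
under eq_bigr => i _ do rewrite vE scaler_sumr.
rewrite exchange_big; apply: eq_bigr => j _.
by rewrite scaler_suml; apply: eq_bigr => i _; rewrite scalerA.
Qed.

Lemma in_span_from_in_span n m (v : 'I_n -> vec) x :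
  in_span_from m v x -> in_span v x.
Proof.
move=> [c ->]; exists (fun i : 'I_n => if (m <= i)%N then c i else 0).
by rewrite big_mkcond; apply: eq_bigr => i _; case: ifP; rewrite ?scale0r.
Qed.

Variables (n : nat) (v : 'I_n -> vec).
Hypothesis v_on : onbasis v.

Lemma cdot_onbasis_sum (P : pred 'I_n) (c : 'I_n -> R[i]) i :
  cdot (v i) (\sum_(j | P j) c j *: v j) = if P i then c i else 0.
Proof.
rewrite cdot_sumr big_mkcond (bigD1 i) //= big1 => [|j ji].
  by rewrite cdotZr v_on eqxx mulr1 addr0; case: (P i).
by case: (P j); rewrite // cdotZr v_on eq_sym (negbTE ji) mulr0.
Qed.

Lemma onbasis_expansion x : in_span v x -> x = \sum_i cdot (v i) x *: v i.
Proof.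
by move=> [c ->]; apply: eq_bigr => i _; rewrite cdot_onbasis_sum.
Qed.

Lemma onbasis_coord_eq0 (c : 'I_n -> R[i]) i : \sum_j c j *: v j = 0 -> c i = 0.
Proof.
move=> c0; have := cdot_onbasis_sum predT c i.
by rewrite c0 /cdot big1 // => k _; rewrite mxE mulr0.
Qed.

Lemma in_span_fromP m x : in_span v x ->
  in_span_from m v x <-> forall i : 'I_n, (i < m)%N -> cdot (v i) x = 0.
Proof.
move=> xv; split=> [[c ->] i im | x0].
  by rewrite cdot_onbasis_sum leqNgt im.
exists (fun i => cdot (v i) x); rewrite {1}(onbasis_expansion xv) [RHS]big_mkcond.
by apply: eq_bigr => i _; case: leqP => // /x0 ->; rewrite scale0r.
Qed.

End Span.

Lemma unity_root_sum_expr (F : idomainType) n (w : F) : n.-unity_root w ->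
  \sum_(a < n) w ^+ a = if w == 1 then n%:R else 0.
Proof.
move=> /unity_rootP wn1; case: eqP => [->|/eqP w1].
  by rewrite (eq_bigr (fun=> 1)) => [|a _]; rewrite ?expr1n // sumr_const card_ord.
have /eqP : (w - 1) * \sum_(a < n) w ^+ a = 0 by rewrite -subrX1 wn1 subrr.
by rewrite mulf_eq0 subr_eq0 (negbTE w1) => /eqP.
Qed.

Lemma prim_root_orthogonality (F : fieldType) n (z : F) (i j : 'I_n) :
  n.-primitive_root z ->
  \sum_(a < n) z ^+ (a * i) * z ^- (a * j) = if i == j then n%:R else 0.
Proof.
move=> z_prim; set w := z ^+ i / z ^+ j.
have zj0 : z ^+ j != 0.
  by rewrite expf_eq0 (prim_root_eq0 z_prim) gtn_eqF ?andbF ?(prim_order_gt0 z_prim).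
have -> : \sum_(a < n) z ^+ (a * i) * z ^- (a * j) = \sum_(a < n) w ^+ a.
  by apply: eq_bigr => a _; rewrite exprMn exprVn -!exprM !(mulnC a).
rewrite unity_root_sum_expr; last first.
  apply/unity_rootP; rewrite exprMn exprVn -!exprM !(mulnC _ n) !exprM.
  by rewrite (prim_expr_order z_prim) !expr1n invr1 mulr1.
have -> : (w == 1) = (z ^+ i == z ^+ j).
  by apply/eqP/eqP => [/divr1_eq // | zij]; rewrite /w zij divff.
by rewrite (eq_prim_root_expr z_prim) !modn_small.
Qed.

Section Cis.
Variable R : realType.

Definition cis (t : R) : R[i] := (cos t +i* sin t)%C.

Lemma cisD s t : cis (s + t) = cis s * cis t.
Proof. by rewrite /cis cosD sinD; simpc; rewrite [sin s * _ + _]addrC. Qed.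

Lemma cisMn t j : cis t ^+ j = cis (t *+ j).
Proof.
elim: j => [|j IHj]; first by rewrite /cis cos0 sin0.
by rewrite exprS IHj -cisD mulrS.
Qed.

Lemma conj_cis t : (cis t)^* = (cis t)^-1.
Proof.
apply/esym/mulr1_eq.
by rewrite /cis; simpc; rewrite -!expr2 cos2Dsin2 (mulrC (sin t)) addNr.
Qed.

Lemma cis_neq1 t : 0 < t < pi *+ 2 -> cis t != 1.
Proof.
move=> /andP[t_gt0 t_lt2pi]; apply/eqP => -[cos_t _].
have /sin_gt0_pi : 0 < t / 2 < pi.
  by rewrite divr_gt0 // ltr_pdivrMr // mulr_natr t_lt2pi.
have := cos2Dsin2 (t / 2); have := cos_mulr2n (t / 2).
have -> : t / 2 *+ 2 = t by rewrite -mulr_natr divfK ?pnatr_eq0.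
rewrite cos_t; nra.
Qed.
End Cis.

Section Zeta.
Variable R : realType.

Lemma zeta_exprE n k : zeta R n ^+ k = cis (pi *+ 2 * (k%:R / n%:R)).
Proof. by rewrite cisMn -[_ *+ k]mulr_natr -[pi *+ 2]mulr_natl; congr cis; ring. Qed.

Lemma zeta_primitive n : (0 < n)%N -> n.-primitive_root (zeta R n).
Proof.
move=> n_gt0; apply/andP; split => //; apply/forallP => j.
rewrite unity_rootE zeta_exprE; have [-> | jn] := eqVneq j.+1 n.
  by rewrite divff ?pnatr_eq0 -?lt0n // mulr1 /cis cos2pi sin2pi eqxx.
apply/eqP/negbTE/cis_neq1.
have pi2_gt0 : 0 < pi *+ 2 :> R by rewrite mulrn_wgt0 ?pi_gt0.
rewrite mulr_gt0 ?divr_gt0 ?ltr0n //= gtr_pMr // ltr_pdivrMr ?ltr0n // mul1r.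
by rewrite ltr_nat ltn_neqAle jn ltn_ord.
Qed.

Lemma conj_zeta_expr n k : (zeta R n ^+ k)^* = zeta R n ^- k.
Proof. by rewrite zeta_exprE conj_cis -zeta_exprE. Qed.

Lemma conj_invsqrt n : (invsqrt R n)^* = invsqrt R n.
Proof. exact: conjc_real. Qed.

Lemma invsqrt_sqr n : invsqrt R n ^+ 2 = n%:R^-1.
Proof.
by rewrite /invsqrt -rmorphXn exprVn sqr_sqrtr ?ler0n // fmorphV rmorph_nat.
Qed.

Lemma zeta_orthonormal n (j k : 'I_n) :
  invsqrt R n ^+ 2 * \sum_(a < n) zeta R n ^+ (a * j) * zeta R n ^- (a * k)
  = (j == k)%:R.
Proof.
have n_gt0 : (0 < n)%N := leq_ltn_trans (leq0n j) (ltn_ord j).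
rewrite prim_root_orthogonality ?zeta_primitive //.
by case: eqP => _; rewrite ?mulr0 // invsqrt_sqr mulVf ?pnatr_eq0 -?lt0n.
Qed.

End Zeta.

Section FourierBasis.
Variables (R : realType) (N n : nat) (e : 'I_n -> 'cV[R[i]]_N).
Local Notation z := (zeta R n).
Local Notation s := (invsqrt R n).

Lemma phi_basisE a : phi_basis e a = \sum_(b < n) (s * z ^- (b * a)) *: e b.
Proof. by rewrite /phi_basis scaler_sumr; apply: eq_bigr => b _; rewrite scalerA. Qed.

Lemma cdot_phi_basis a x :
  cdot (phi_basis e a) x = s * \sum_(b < n) z ^+ (b * a) * cdot (e b) x.
Proof.
rewrite /phi_basis cdotZl conj_invsqrt cdot_suml; congr (_ * _).
by apply: eq_bigr => b _; rewrite cdotZl fmorphV /= conj_zeta_expr invrK.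
Qed.

Lemma basis_phi_expansion b : e b = \sum_(a < n) (s * z ^+ (a * b)) *: phi_basis e a.
Proof.
have coefE (c : 'I_n) :
    \sum_(a < n) s * z ^+ (a * b) * (s * z ^- (c * a)) = (b == c)%:R.
  rewrite -(zeta_orthonormal R b c) mulr_sumr.
  by apply: eq_bigr => a _; rewrite (mulnC c a); ring.
under eq_bigr => a _ do rewrite phi_basisE scaler_sumr.
rewrite exchange_big /=.
under eq_bigr => c _ do
  rewrite (eq_bigr _ (fun a _ => scalerA _ _ _)) -scaler_suml coefE.
rewrite (bigD1 b) //= eqxx scale1r big1 ?addr0 // => c cb.
by rewrite eq_sym (negbTE cb) scale0r.
Qed.

Lemma in_span_phi_basis x : in_span (phi_basis e) x <-> in_span e x.
Proof.
by split; apply: in_span_trans; [exact: phi_basisE | exact: basis_phi_expansion].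
Qed.

Hypothesis e_on : onbasis e.

Lemma phi_basis_onbasis : onbasis (phi_basis e).
Proof.
move=> a a'; rewrite cdot_phi_basis phi_basisE -(zeta_orthonormal R a a').
rewrite expr2 -mulrA; congr (_ * _); rewrite mulr_sumr; apply: eq_bigr => b _.
by rewrite cdot_onbasis_sum // (mulnC b a) (mulnC b a'); ring.
Qed.

End FourierBasis.

Section TransitionOperator.
Variables (R : realType) (N nk nk' : nat).
Variables (e : 'I_nk -> 'cV[R[i]]_N) (f : 'I_nk' -> 'cV[R[i]]_N).
Hypothesis le_nk'_nk : (nk' <= nk)%N.
Local Notation phi b := (phi_basis e (widen_ord le_nk'_nk b)).

Lemma Zop_mulmx x : Zop e f *m x = \sum_(b < nk') cdot (phi b) x *: f b.
Proof.
rewrite /Zop -scalemxAl mulmx_suml scaler_sumr; apply: eq_bigr => b _.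
rewrite cdot_phi_basis -scalerA; congr (_ *: _).
rewrite mulmx_suml scaler_suml; apply: eq_bigr => a _.
by rewrite -scalemxAl ketbra_mulmx scalerA mulnC.
Qed.

Hypothesis f_on : onbasis f.

Lemma Zop_mulmx_eq0 x :
  Zop e f *m x = 0 <-> forall a : 'I_nk, (a < nk')%N -> cdot (phi_basis e a) x = 0.
Proof.
rewrite Zop_mulmx; split=> [Zx0 a a_lt | phi_x0].
  have := onbasis_coord_eq0 f_on (Ordinal a_lt) Zx0.
  by rewrite (_ : widen_ord _ _ = a) //; apply: val_inj.
by rewrite big1 // => b _; rewrite phi_x0 ?scale0r //; exact: (ltn_ord b).
Qed.

End TransitionOperator.

Theorem corollary2p5 (R : realType) (N nk nk' : nat)
  (e : 'I_nk -> 'cV[R[i]]_N) (f : 'I_nk' -> 'cV[R[i]]_N) :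
  onbasis e -> onbasis f ->
  (forall (a : 'I_nk) (b : 'I_nk'), cdot (e a) (f b) = 0) ->
  (nk' <= nk)%N ->
  forall x : 'cV[R[i]]_N,
    ((in_span e x /\ adj (Zop e f) *m Zop e f *m x = 0)
       <-> (in_span e x /\ Zop e f *m x = 0))
    /\ ((in_span e x /\ Zop e f *m x = 0)
       <-> in_span_from nk' (phi_basis e) x).
Proof.
move=> e_on f_on _ le_nk'_nk x.
have kerZ := Zop_mulmx_eq0 e le_nk'_nk f_on x.
have kerZ_phi (xe : in_span e x) :=
  in_span_fromP (phi_basis_onbasis e_on) nk' ((in_span_phi_basis e x).2 xe).
split; first by split=> -[xe /mulmx_adj_self_eq0 Zx0].
split=> [[xe /kerZ] | x_from]; first exact: (kerZ_phi xe).2.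
have xe : in_span e x by apply/in_span_phi_basis/(in_span_from_in_span x_from).
by split=> //; apply/kerZ; exact: (kerZ_phi xe).1.
Qed.
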